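(* Let $(H,\Delta)$ be a Hopf algebra and $(A,\alpha)$ a Galois coaction with $H$-coinvariant local units. Let $p\in M(A^\alpha)$ be an idempotent with $A^\alpha pA^\alpha=A^\alpha$. Then $\alpha$ restricts to a Galois coaction $\beta$ on $B=pAp$, and $(B,\beta)$ is $H$-equivariantly Morita equivalent to $(A,\alpha)$ (via the context $(Ap,pA)$).
   Context: An $H$-comodule algebra $(A,\alpha)$ is a (possibly non-unital) algebra with algebra map $\alpha:A\to A\otimes H$ making $A$ a right $H$-comodule; $A^\alpha=\{a:\alpha(a)=a\otimes1\}$; $H$-coinvariant local units: every finite subset of $A$ admits an idempotent $e\in A^\alpha$ acting as two-sided unit on it. $(A,\alpha)$ is a Galois coaction if the Galois map $A\otimes_{A^\alpha}A\to A\otimes H$, $a\otimes b\mapsto(a\otimes1)\alpha(b)$, is bijective. $M(D)$ is the multiplier algebra of $D$ (pairs $(\lambda,\rho)$ of linear maps on $D$ with $\lambda(xy)=\lambda(x)y$, $\rho(xy)=x\rho(y)$, $x\lambda(y)=\rho(x)y$); since $A^\alpha\subseteq A$ is non-degenerate under the coinvariant local units assumption, $M(A^\alpha)\subseteq M(A)$, so $pAp$ makes sense. An $H$-equivariant Morita context between comodule algebras is a Morita context (associative pairings $A_{ij}\times A_{jl}\to A_{il}$) all of whose spaces are $H$-comodules and whose multiplications are comodule maps; strict if all $A_{ij}\otimes_{A_{jj}}A_{ji}\to A_{ii}$ are bijective; equivariant Morita equivalence means existence of a strict equivariant Morita context. *)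

(* Tensor products over a field k are represented by finite
   formal sums (seq of pairs/triples) modulo the equality induced by all
   k-valued multilinear (resp. balanced bilinear) forms; over a field this is
   exactly equality in the (balanced) tensor product. *)
From HB Require Import structures.
From mathcomp Require Import all_boot all_order all_algebra.
Set Implicit Arguments. Unset Strict Implicit. Unset Printing Implicit Defensive.
Import GRing.Theory.
Local Open Scope ring_scope.

Definition bilin (k : fieldType) (U V : lmodType k) (f : U -> V -> k) : Prop :=
  (forall v a u1 u2, f (a *: u1 + u2) v = a * f u1 v + f u2 v) /\
  (forall u a v1 v2, f u (a *: v1 + v2) = a * f u v1 + f u v2).

Definition trilin (k : fieldType) (U V W : lmodType k) (f : U -> V -> W -> k) : Prop :=
  [/\ (forall v w a u1 u2, f (a *: u1 + u2) v w = a * f u1 v w + f u2 v w),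
      (forall u w a v1 v2, f u (a *: v1 + v2) w = a * f u v1 w + f u v2 w) &
      (forall u v a w1 w2, f u v (a *: w1 + w2) = a * f u v w1 + f u v w2)].

Definition teq2 (k : fieldType) (U V : lmodType k) (s t : seq (U * V)) : Prop :=
  forall f : U -> V -> k, bilin f ->
    \sum_(x <- s) f x.1 x.2 = \sum_(x <- t) f x.1 x.2.

Definition teq3 (k : fieldType) (U V W : lmodType k) (s t : seq (U * V * W)) : Prop :=
  forall f : U -> V -> W -> k, trilin f ->
    \sum_(x <- s) f x.1.1 x.1.2 x.2 = \sum_(x <- t) f x.1.1 x.1.2 x.2.

Definition tscale (k : fieldType) (U V : lmodType k) (a : k) (s : seq (U * V)) :=
  [seq (a *: x.1, x.2) | x <- s].

Record is_hopf (k : fieldType) (H : algType k) (D : H -> seq (H * H))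
    (eps : H -> k) (S : H -> H) : Prop := {
  D_lin : forall a g h, teq2 (D (a *: g + h)) (tscale a (D g) ++ D h);
  D_mul : forall g h, teq2 (D (g * h)) [seq (x.1 * y.1, x.2 * y.2) | x <- D g, y <- D h];
  D_one : teq2 (D 1) [:: (1, 1)];
  D_coass : forall h, teq3 [seq ((y.1, y.2), x.2) | x <- D h, y <- D x.1]
                           [seq ((x.1, y.1), y.2) | x <- D h, y <- D x.2];
  eps_lin : forall a g h, eps (a *: g + h) = a * eps g + eps h;
  eps_mul : forall g h, eps (g * h) = eps g * eps h;
  eps_one : eps 1 = 1;
  counit_l : forall h, \sum_(x <- D h) eps x.1 *: x.2 = h;
  counit_r : forall h, \sum_(x <- D h) eps x.2 *: x.1 = h;
  S_lin : forall a g h, S (a *: g + h) = a *: S g + S h;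
  antipode_l : forall h, \sum_(x <- D h) S x.1 * x.2 = eps h *: 1;
  antipode_r : forall h, \sum_(x <- D h) x.1 * S x.2 = eps h *: 1 }.

Record is_nualg (k : fieldType) (A : lmodType k) (m : A -> A -> A) : Prop := {
  nu_assoc : forall x y z, m (m x y) z = m x (m y z);
  nu_linl : forall a x y z, m (a *: x + y) z = a *: m x z + m y z;
  nu_linr : forall a x y z, m z (a *: x + y) = a *: m z x + m z y }.

Record is_comod_alg (k : fieldType) (H : algType k) (D : H -> seq (H * H))
    (eps : H -> k) (A : lmodType k) (m : A -> A -> A) (al : A -> seq (A * H)) : Prop := {
  ca_alg : is_nualg m;
  al_lin : forall a x y, teq2 (al (a *: x + y)) (tscale a (al x) ++ al y);
  al_mul : forall x y, teq2 (al (m x y)) [seq (m u.1 v.1, u.2 * v.2) | u <- al x, v <- al y];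
  al_coass : forall x, teq3 [seq ((y.1, y.2), u.2) | u <- al x, y <- al u.1]
                            [seq ((u.1, y.1), y.2) | u <- al x, y <- D u.2];
  al_counit : forall x, \sum_(u <- al x) eps u.2 *: u.1 = x }.

Definition coinv (k : fieldType) (H : algType k) (A : lmodType k)
    (al : A -> seq (A * H)) (x : A) : Prop := teq2 (al x) [:: (x, 1)].

Definition coinv_local_units (k : fieldType) (H : algType k) (A : lmodType k)
    (m : A -> A -> A) (al : A -> seq (A * H)) : Prop :=
  forall s : seq A, exists e, [/\ coinv al e, m e e = e &
    forall x, x \in s -> m e x = x /\ m x e = x].

Definition in2 (k : fieldType) (A : lmodType k) (X Y : A -> Prop) (s : seq (A * A)) :=
  forall u, u \in s -> X u.1 /\ Y u.2.

(* equality in X (x)_R Y (X,Y,R subsets of A, R acting by multiplication) *)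
Definition bal_eq (k : fieldType) (A : lmodType k) (m : A -> A -> A)
    (X Y R : A -> Prop) (s t : seq (A * A)) : Prop :=
  forall f : A -> A -> k, bilin f ->
    (forall x y r, X x -> Y y -> R r -> f (m x r) y = f x (m r y)) ->
    \sum_(u <- s) f u.1 u.2 = \sum_(u <- t) f u.1 u.2.

Definition mulmap (k : fieldType) (A : lmodType k) (m : A -> A -> A) (s : seq (A * A)) :=
  \sum_(u <- s) m u.1 u.2.

Definition mult_bij (k : fieldType) (A : lmodType k) (m : A -> A -> A)
    (X Y R T : A -> Prop) : Prop :=
  (forall s t, in2 X Y s -> in2 X Y t -> mulmap m s = mulmap m t -> bal_eq m X Y R s t) /\
  (forall z, T z -> exists s, in2 X Y s /\ mulmap m s = z).

(* Galois map  a (x) b |-> (a (x) 1) al(b) *)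
Definition galmap (k : fieldType) (H : algType k) (A : lmodType k)
    (m : A -> A -> A) (al : A -> seq (A * H)) (s : seq (A * A)) : seq (A * H) :=
  flatten [seq [seq (m x.1 y.1, y.2) | y <- al x.2] | x <- s].

Definition galois_on (k : fieldType) (H : algType k) (A : lmodType k)
    (m : A -> A -> A) (al : A -> seq (A * H)) (C : A -> Prop) : Prop :=
  (forall s t, in2 C C s -> in2 C C t -> teq2 (galmap m al s) (galmap m al t) ->
     bal_eq m C C (fun x => C x /\ coinv al x) s t) /\
  (forall u : seq (A * H), (forall v, v \in u -> C v.1) ->
     exists s, in2 C C s /\ teq2 (galmap m al s) u).

Definition galois_coaction (k : fieldType) (H : algType k) (D : H -> seq (H * H))
    (eps : H -> k) (A : lmodType k) (m : A -> A -> A) (al : A -> seq (A * H)) : Prop :=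
  is_comod_alg D eps m al /\ galois_on m al (fun _ => True).

Definition subspace (k : fieldType) (A : lmodType k) (C : A -> Prop) : Prop :=
  C 0 /\ forall a x y, C x -> C y -> C (a *: x + y).

Definition subcomod (k : fieldType) (H : algType k) (A : lmodType k)
    (al : A -> seq (A * H)) (C : A -> Prop) : Prop :=
  forall x, C x -> exists s : seq (A * H), (forall u, u \in s -> C u.1) /\ teq2 (al x) s.

Definition is_multiplier (k : fieldType) (A : lmodType k) (m : A -> A -> A)
    (D : A -> Prop) (lam rho : A -> A) : Prop :=
  (forall a x y, D x -> D y ->
     lam (a *: x + y) = a *: lam x + lam y /\ rho (a *: x + y) = a *: rho x + rho y) /\
  (forall x y, D x -> D y ->
     [/\ D (lam x), D (rho x), lam (m x y) = m (lam x) y,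
         rho (m x y) = m x (rho y) & m x (lam y) = m (rho x) y]).

(* p = (lam, rho) is idempotent in M(D) *)
Definition mult_idem (k : fieldType) (A : lmodType k) (D : A -> Prop) (lam rho : A -> A) :=
  forall x, D x -> lam (lam x) = lam x /\ rho (rho x) = rho x.

Definition mult_full (k : fieldType) (A : lmodType k) (m : A -> A -> A)
    (D : A -> Prop) (lam : A -> A) : Prop :=
  forall z, D z -> exists s, in2 D D s /\ z = \sum_(u <- s) m u.1 (lam u.2).

(* p a, a p, p a p computed via a coinvariant local unit e of a:
   p a = (p e) a = lam(e) a, a p = a (e p) = a rho(e). *)
Definition pA_set (k : fieldType) (H : algType k) (A : lmodType k) (m : A -> A -> A)
    (al : A -> seq (A * H)) (lam : A -> A) (x : A) : Prop :=
  exists a e, [/\ coinv al e, m e a = a & x = m (lam e) a].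

Definition Ap_set (k : fieldType) (H : algType k) (A : lmodType k) (m : A -> A -> A)
    (al : A -> seq (A * H)) (rho : A -> A) (x : A) : Prop :=
  exists a e, [/\ coinv al e, m a e = a & x = m a (rho e)].

Definition pAp_set (k : fieldType) (H : algType k) (A : lmodType k) (m : A -> A -> A)
    (al : A -> seq (A * H)) (lam rho : A -> A) (x : A) : Prop :=
  exists a e, [/\ coinv al e, m e a = a, m a e = a & x = m (m (lam e) a) (rho e)].

Definition mulclosed (k : fieldType) (A : lmodType k) (m : A -> A -> A)
    (X Y Z : A -> Prop) : Prop := forall x y, X x -> Y y -> Z (m x y).

From HB Require Import structures.
From mathcomp Require Import all_boot all_order all_algebra.
From Stdlib Require Import ClassicalEpsilon.
Set Implicit Arguments. Unset Strict Implicit. Unset Printing Implicit Defensive.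
Import GRing.Theory.
Local Open Scope ring_scope.

(* Write [p a], [a p] and [p a p] for the products with the idempotent multiplier
   [p], computed through any coinvariant local unit of [a]. These maps are
   comodule maps, so [B = pAp], [pA] and [Ap] are subcomodules and all the
   products of the Morita context are restrictions of the product of [A].
   Fullness [A^al p A^al = A^al] writes every coinvariant local unit as
   [g = sum w1 p w2] with [w1, w2] coinvariant. Inserting such a [g] shows that
   [Ap (x)_B pA -> A] is bijective and that the Galois map of [B] is onto; it also
   extends a bilinear form [f] on [B x B] balanced over [B^beta] to the form
   [F x y = sum f (p x w1 p) (p w2 y p)] on [A x A], which is balanced over [A^al]
   and agrees with [f] on [B x B], so injectivity of the Galois map of [A]
   gives injectivity for [B]. *)

Section LinearSums.
Variable k : fieldType.

Lemma linear_fun0 (U V : lmodType k) (phi : U -> V) : linear phi -> phi 0 = 0.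
Proof. by move=> hphi; have := hphi (-1) 0 0; rewrite scaler0 addr0 scaleN1r addNr. Qed.

Lemma linear_bigsum (U V : lmodType k) (phi : U -> V) : linear phi ->
  forall (I : Type) (r : seq I) (F : I -> U),
  phi (\sum_(i <- r) F i) = \sum_(i <- r) phi (F i).
Proof.
move=> hphi I r F; have phiD : {morph phi : x y / x + y}.
  by move=> x y; have := hphi 1 x y; rewrite !scale1r.
exact: (big_morph phi phiD (linear_fun0 hphi)).
Qed.

Lemma scalar_bigsum (U : lmodType k) (phi : U -> k) : scalar phi ->
  forall (I : Type) (r : seq I) (F : I -> U),
  phi (\sum_(i <- r) F i) = \sum_(i <- r) phi (F i).
Proof.
move=> hphi I r F; have phi0 : phi 0 = 0.
  by have := hphi (-1) 0 0; rewrite scaler0 addr0 mulN1r addNr.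
have phiD : {morph phi : x y / x + y}.
  by move=> x y; have := hphi 1 x y; rewrite scale1r mul1r.
exact: (big_morph phi phiD phi0).
Qed.

Lemma bilin_suml (U V : lmodType k) (f : U -> V -> k) : bilin f ->
  forall (I : Type) (r : seq I) (F : I -> U) y,
  f (\sum_(i <- r) F i) y = \sum_(i <- r) f (F i) y.
Proof. by case=> hl _ I r F y; apply: (scalar_bigsum (phi := f^~ y)) => a x1 x2; apply: hl. Qed.

Lemma bilin_sumr (U V : lmodType k) (f : U -> V -> k) : bilin f ->
  forall (I : Type) (r : seq I) (F : I -> V) x,
  f x (\sum_(i <- r) F i) = \sum_(i <- r) f x (F i).
Proof. by case=> _ hr I r F x; apply: (scalar_bigsum (phi := f x)) => a y1 y2; apply: hr. Qed.

Lemma bilin_compl (U V : lmodType k) (phi : U -> U) (f : U -> V -> k) :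
  linear phi -> bilin f -> bilin (fun x => f (phi x)).
Proof. by move=> hphi [hl hr]; split => *; rewrite ?hphi ?hl ?hr. Qed.

Lemma subspace_image (U : lmodType k) (phi : U -> U) (P : U -> Prop) :
  linear phi -> (forall x, P x <-> exists a, x = phi a) -> subspace P.
Proof.
move=> hphi hP; split; first by apply/hP; exists 0; rewrite (linear_fun0 hphi).
by move=> c x y /hP [a ->] /hP [b ->]; apply/hP; exists (c *: a + b); rewrite hphi.
Qed.

Lemma teq2_sym (U V : lmodType k) (s t : seq (U * V)) : teq2 s t -> teq2 t s.
Proof. by move=> hst f hf; rewrite hst. Qed.

Lemma teq2_trans (U V : lmodType k) (s t u : seq (U * V)) :
  teq2 s t -> teq2 t u -> teq2 s u.
Proof. by move=> hst htu f hf; rewrite hst // htu. Qed.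

Lemma teq2_cat (U V : lmodType k) (s t s' t' : seq (U * V)) :
  teq2 s s' -> teq2 t t' -> teq2 (s ++ t) (s' ++ t').
Proof. by move=> hs ht f hf; rewrite !big_cat /= hs // ht. Qed.

Lemma teq2_map_fst (U V : lmodType k) (phi : U -> U) (s t : seq (U * V)) :
  linear phi -> teq2 s t ->
  teq2 [seq (phi u.1, u.2) | u <- s] [seq (phi u.1, u.2) | u <- t].
Proof.
move=> hphi hst f hf; rewrite !big_map /=.
exact: (hst (fun x y => f (phi x) y) (bilin_compl hphi hf)).
Qed.

End LinearSums.

Section CornerAlgebra.
Variables (k : fieldType) (H : algType k) (A : lmodType k) (m : A -> A -> A)
  (al : A -> seq (A * H)) (lam rho : A -> A).
Hypothesis m_nualg : is_nualg m.
Hypothesis al_mulm : forall x y,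
  teq2 (al (m x y)) [seq (m u.1 v.1, u.2 * v.2) | u <- al x, v <- al y].

Local Notation "x ** y" := (m x y) (at level 40, left associativity).
Local Notation Ainv := (coinv al).

Lemma mulmA x y z : x ** y ** z = x ** (y ** z).
Proof. exact: (nu_assoc m_nualg). Qed.

Lemma mulm_linearl z : linear (m^~ z).
Proof. by move=> a x y; apply: (nu_linl m_nualg). Qed.

Lemma mulm_linearr z : linear (m z).
Proof. by move=> a x y; apply: (nu_linr m_nualg). Qed.

Lemma mulmPl z a x y : (a *: x + y) ** z = a *: (x ** z) + y ** z.
Proof. exact: mulm_linearl. Qed.

Lemma mulmPr z a x y : z ** (a *: x + y) = a *: (z ** x) + z ** y.
Proof. exact: mulm_linearr. Qed.

Lemma mulm_suml (I : Type) (r : seq I) (F : I -> A) z :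
  (\sum_(i <- r) F i) ** z = \sum_(i <- r) (F i ** z).
Proof. exact: (linear_bigsum (mulm_linearl z)). Qed.

Lemma mulm_sumr (I : Type) (r : seq I) (F : I -> A) z :
  z ** (\sum_(i <- r) F i) = \sum_(i <- r) (z ** F i).
Proof. exact: (linear_bigsum (mulm_linearr z)). Qed.

Lemma coact_coinvMl c x : Ainv c ->
  teq2 (al (c ** x)) [seq (c ** u.1, u.2) | u <- al x].
Proof.
move=> hc f hf; rewrite (al_mulm c x hf) big_allpairs_dep /= exchange_big /= big_map.
case: hf => fl fr; apply: eq_bigr => w _.
have := hc (fun u h => f (u ** w.1) (h * w.2)); rewrite big_seq1 mul1r; apply.
split=> [v a u1 u2|u a v1 v2]; first by rewrite mulmPl fl.
by rewrite mulrDl -scalerAl fr.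
Qed.

Lemma coact_coinvMr c x : Ainv c ->
  teq2 (al (x ** c)) [seq (u.1 ** c, u.2) | u <- al x].
Proof.
move=> hc f hf; rewrite (al_mulm x c hf) big_allpairs_dep /= big_map.
case: hf => fl fr; apply: eq_bigr => w _.
have := hc (fun u h => f (w.1 ** u) (w.2 * h)); rewrite big_seq1 mulr1; apply.
split=> [v a u1 u2|u a v1 v2]; first by rewrite mulmPr fl.
by rewrite mulrDr -scalerAr fr.
Qed.

Lemma coinvM x y : Ainv x -> Ainv y -> Ainv (x ** y).
Proof.
move=> hx hy; apply: teq2_trans (coact_coinvMl y hx) _.
exact: (teq2_map_fst (mulm_linearr x) hy).
Qed.

Lemma subcomod_image (phi : A -> A) (P : A -> Prop) :
  (forall x, P x <-> exists a, x = phi a) ->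
  (forall a, teq2 (al (phi a)) [seq (phi u.1, u.2) | u <- al a]) -> subcomod al P.
Proof.
move=> hP hphi x /hP [a ->]; exists [seq (phi u.1, u.2) | u <- al a]; split => //.
by move=> u /mapP [v _ ->]; apply/hP; exists v.1.
Qed.

Lemma galmap_sum (s : seq (A * A)) (f : A -> H -> k) :
  \sum_(z <- galmap m al s) f z.1 z.2 = \sum_(x <- s) \sum_(y <- al x.2) f (x.1 ** y.1) y.2.
Proof. by rewrite big_flatten big_map; apply: eq_bigr => x _; rewrite big_map. Qed.

Lemma galmap_cat s t : galmap m al (s ++ t) = galmap m al s ++ galmap m al t.
Proof. by rewrite /galmap map_cat flatten_cat. Qed.

Lemma coact_absorb_unit u x : Ainv u -> u ** x = x ->
  teq2 [seq (u ** z.1, z.2) | z <- al x] (al x).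
Proof. by move=> hu ux; apply: teq2_sym; rewrite -{1}ux; exact: coact_coinvMl. Qed.

(** * Products with the idempotent multiplier *)

Hypothesis local_units : coinv_local_units m al.
Hypothesis p_mult : is_multiplier m Ainv lam rho.
Hypothesis p_idem : mult_idem Ainv lam rho.

Lemma coinv_lam x : Ainv x -> Ainv (lam x).
Proof. by move=> hx; case: (proj2 p_mult x x hx hx). Qed.

Lemma coinv_rho x : Ainv x -> Ainv (rho x).
Proof. by move=> hx; case: (proj2 p_mult x x hx hx). Qed.

Lemma lamM x y : Ainv x -> Ainv y -> lam (x ** y) = lam x ** y.
Proof. by move=> hx hy; case: (proj2 p_mult x y hx hy). Qed.

Lemma rhoM x y : Ainv x -> Ainv y -> rho (x ** y) = x ** rho y.
Proof. by move=> hx hy; case: (proj2 p_mult x y hx hy). Qed.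

Lemma mulm_lam x y : Ainv x -> Ainv y -> x ** lam y = rho x ** y.
Proof. by move=> hx hy; case: (proj2 p_mult x y hx hy). Qed.

Lemma lam_idem x : Ainv x -> lam (lam x) = lam x.
Proof. by move=> hx; case: (p_idem hx). Qed.

Lemma rho_idem x : Ainv x -> rho (rho x) = rho x.
Proof. by move=> hx; case: (p_idem hx). Qed.

Lemma local_unit (s : seq A) :
  exists e, Ainv e /\ forall x, x \in s -> e ** x = x /\ x ** e = x.
Proof. by case: (local_units s) => e [he _ hs]; exists e. Qed.

Lemma local_unit1 a : exists e, Ainv e /\ e ** a = a /\ a ** e = a.
Proof. by case: (local_unit [:: a]) => e [he hs]; exists e; split => //; apply/hs/mem_head. Qed.

Lemma local_unit2 x y :
  exists e, Ainv e /\ [/\ e ** x = x, x ** e = x, e ** y = y & y ** e = y].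
Proof.
case: (local_unit [:: x; y]) => e [he hs]; exists e; split => //.
have [ex xe] := hs x (mem_head _ _).
have [ey ye] : e ** y = y /\ y ** e = y by apply: hs; rewrite !inE eqxx orbT.
by [].
Qed.

Definition unit_of a := proj1_sig (constructive_indefinite_description _ (local_unit1 a)).

Lemma unit_ofP a : Ainv (unit_of a) /\ unit_of a ** a = a /\ a ** unit_of a = a.
Proof. exact: (proj2_sig (constructive_indefinite_description _ (local_unit1 a))). Qed.

Definition pmul a := lam (unit_of a) ** a.
Definition mulp a := a ** rho (unit_of a).

Lemma pmulE e a : Ainv e -> e ** a = a -> pmul a = lam e ** a.
Proof.
move=> he ea; rewrite /pmul; have [hu [ua _]] := unit_ofP a.
have [g [hg [ge _ gu _]]] := local_unit2 e (unit_of a).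
have lam_absorb e' : Ainv e' -> e' ** a = a -> g ** e' = e' -> lam e' ** a = lam g ** a.
  by move=> he' e'a ge'; rewrite -{1}ge' lamM // mulmA e'a.
by rewrite (lam_absorb e) // (lam_absorb (unit_of a)).
Qed.

Lemma mulpE e a : Ainv e -> a ** e = a -> mulp a = a ** rho e.
Proof.
move=> he ae; rewrite /mulp; have [hu [_ au]] := unit_ofP a.
have [g [hg [_ eg _ ug]]] := local_unit2 e (unit_of a).
have rho_absorb e' : Ainv e' -> a ** e' = a -> e' ** g = e' -> a ** rho e' = a ** rho g.
  by move=> he' ae' e'g; rewrite -{1}e'g rhoM // -mulmA ae'.
by rewrite (rho_absorb e) // (rho_absorb (unit_of a)).
Qed.

Lemma linear_pmul : linear pmul.
Proof.
move=> c x y; have [e [he [ex _ ey _]]] := local_unit2 x y.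
have ez : e ** (c *: x + y) = c *: x + y by rewrite mulmPr ex ey.
by rewrite (pmulE he ez) (pmulE he ex) (pmulE he ey) mulmPr.
Qed.

Lemma linear_mulp : linear mulp.
Proof.
move=> c x y; have [e [he [_ xe _ ye]]] := local_unit2 x y.
have ze : (c *: x + y) ** e = c *: x + y by rewrite mulmPl xe ye.
by rewrite (mulpE he ze) (mulpE he xe) (mulpE he ye) mulmPl.
Qed.

Lemma pmulM x y : pmul (x ** y) = pmul x ** y.
Proof.
have [e [he [ex _]]] := local_unit1 x.
have exy : e ** (x ** y) = x ** y by rewrite -mulmA ex.
by rewrite (pmulE he ex) (pmulE he exy) mulmA.
Qed.

Lemma mulpM x y : mulp (x ** y) = x ** mulp y.
Proof.
have [e [he [_ ye]]] := local_unit1 y.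
have xye : x ** y ** e = x ** y by rewrite mulmA ye.
by rewrite (mulpE he ye) (mulpE he xye) mulmA.
Qed.

Lemma mulm_pmul x y : x ** pmul y = mulp x ** y.
Proof.
have [e [he [_ xe ey _]]] := local_unit2 x y.
rewrite (pmulE he ey) (mulpE he xe).
by rewrite -{1}xe -{2}ey mulmA -(mulmA e) mulm_lam // !mulmA.
Qed.

Lemma pmul_coinv c : Ainv c -> pmul c = lam c.
Proof. by move=> hc; have [e [he [ec _]]] := local_unit1 c; rewrite (pmulE he ec) -lamM // ec. Qed.

Lemma pmul_idem x : pmul (pmul x) = pmul x.
Proof.
have [e [he [ex _]]] := local_unit1 x; rewrite (pmulE he ex).
have [g [hg [_ _ gle _]]] := local_unit2 e (lam e).
have glex : g ** (lam e ** x) = lam e ** x by rewrite -mulmA gle.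
rewrite (pmulE hg glex) -mulmA -lamM //; last exact: coinv_lam.
by rewrite gle lam_idem.
Qed.

Lemma mulp_pmul x y : mulp x ** pmul y = x ** pmul y.
Proof. by rewrite -mulm_pmul pmul_idem. Qed.

Lemma mulp_idem x : mulp (mulp x) = mulp x.
Proof.
have [e [he [_ xe]]] := local_unit1 x; rewrite (mulpE he xe).
have [g [hg [_ _ _ reg]]] := local_unit2 e (rho e).
have xreg : x ** rho e ** g = x ** rho e by rewrite mulmA reg.
rewrite (mulpE hg xreg) mulmA -rhoM //; last exact: coinv_rho.
by rewrite reg rho_idem.
Qed.

Lemma pmul_mulpC x : pmul (mulp x) = mulp (pmul x).
Proof.
have [e [he [_ xe]]] := local_unit1 x.
have pxe : pmul x ** e = pmul x by rewrite -pmulM xe.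
by rewrite (mulpE he xe) (mulpE he pxe) pmulM.
Qed.

Lemma coact_pmul a : teq2 (al (pmul a)) [seq (pmul u.1, u.2) | u <- al a].
Proof.
have [e [he hs]] := local_unit (a :: [seq u.1 | u <- al a]).
have [ea _] := hs a (mem_head _ _); rewrite (pmulE he ea).
apply: teq2_trans (coact_coinvMl _ (coinv_lam he)) _.
suff -> : [seq (lam e ** u.1, u.2) | u <- al a] = [seq (pmul u.1, u.2) | u <- al a] by [].
apply/eq_in_map => u hu.
have [eu _] : e ** u.1 = u.1 /\ u.1 ** e = u.1 by apply: hs; rewrite inE map_f ?orbT.
by rewrite (pmulE he eu).
Qed.

Lemma coact_mulp a : teq2 (al (mulp a)) [seq (mulp u.1, u.2) | u <- al a].
Proof.
have [e [he hs]] := local_unit (a :: [seq u.1 | u <- al a]).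
have [_ ae] := hs a (mem_head _ _); rewrite (mulpE he ae).
apply: teq2_trans (coact_coinvMr _ (coinv_rho he)) _.
suff -> : [seq (u.1 ** rho e, u.2) | u <- al a] = [seq (mulp u.1, u.2) | u <- al a] by [].
apply/eq_in_map => u hu.
have [_ ue] : e ** u.1 = u.1 /\ u.1 ** e = u.1 by apply: hs; rewrite inE map_f ?orbT.
by rewrite (mulpE he ue).
Qed.

Definition pmulp a := pmul (mulp a).

Lemma linear_pmulp : linear pmulp.
Proof. by move=> c x y; rewrite /pmulp linear_mulp linear_pmul. Qed.

Lemma pmul_pmulp a : pmul (pmulp a) = pmulp a.
Proof. exact: pmul_idem. Qed.

Lemma mulp_pmulp a : mulp (pmulp a) = pmulp a.
Proof. by rewrite /pmulp pmul_mulpC mulp_idem. Qed.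

Lemma pmulp_idem a : pmulp (pmulp a) = pmulp a.
Proof. by rewrite {1}/pmulp mulp_pmulp pmul_pmulp. Qed.

Lemma pmulpM x y : pmulp x ** pmulp y = pmulp (x ** pmul y).
Proof. by rewrite /pmulp -pmulM -mulm_pmul pmul_idem pmul_mulpC -mulpM. Qed.

Lemma pmulpMl a w : pmulp (pmulp a ** w) = pmulp a ** pmulp w.
Proof. by rewrite {2}/pmulp mulm_pmul mulp_pmulp /pmulp mulpM pmulM -/(pmulp a) pmul_pmulp. Qed.

Lemma pmulpMr a w : pmulp (w ** pmulp a) = pmulp w ** pmulp a.
Proof. by rewrite /pmulp mulpM -/(pmulp a) mulp_pmulp -pmulM -mulm_pmul pmul_pmulp. Qed.

Lemma coact_pmulp a : teq2 (al (pmulp a)) [seq (pmulp u.1, u.2) | u <- al a].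
Proof.
apply: teq2_trans (coact_pmul _) _.
by have := teq2_map_fst linear_pmul (coact_mulp a); rewrite -map_comp.
Qed.

Lemma coact_pmulp_coinvMl c y : Ainv c ->
  teq2 (al (pmulp (c ** y))) [seq (pmulp (c ** z.1), z.2) | z <- al y].
Proof.
move=> hc; apply: teq2_trans (coact_pmulp _) _.
by have := teq2_map_fst linear_pmulp (coact_coinvMl y hc); rewrite -map_comp.
Qed.

Lemma coinv_pmulp c : Ainv c -> Ainv (pmulp c).
Proof.
by move=> hc; apply: teq2_trans (coact_pmulp c) _; exact: (teq2_map_fst linear_pmulp hc).
Qed.

Local Notation B := (pAp_set m al lam rho).
Local Notation pA := (pA_set m al lam).
Local Notation Ap := (Ap_set m al rho).
Local Notation T := (fun _ : A => True).

Lemma pA_setP x : pA x <-> exists a, x = pmul a.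
Proof.
split; first by case=> a [e [he ea ->]]; exists a; rewrite (pmulE he ea).
by case=> a ->; have [e [he [ea _]]] := local_unit1 a; exists a, e; rewrite (pmulE he ea).
Qed.

Lemma Ap_setP x : Ap x <-> exists a, x = mulp a.
Proof.
split; first by case=> a [e [he ae ->]]; exists a; rewrite (mulpE he ae).
by case=> a ->; have [e [he [_ ae]]] := local_unit1 a; exists a, e; rewrite (mulpE he ae).
Qed.

Lemma pAp_setP x : B x <-> exists a, x = pmulp a.
Proof.
split=> [[a [e [he ea ae ->]]]|[a ->]].
  by exists a; rewrite /pmulp (mulpE he ae) pmulM (pmulE he ea).
have [e [he [ea ae]]] := local_unit1 a; exists a, e.
by rewrite /pmulp (mulpE he ae) pmulM (pmulE he ea).
Qed.

Lemma pA_pmul a : pA (pmul a). Proof. by apply/pA_setP; exists a. Qed.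
Lemma Ap_mulp a : Ap (mulp a). Proof. by apply/Ap_setP; exists a. Qed.
Lemma pAp_pmulp a : B (pmulp a). Proof. by apply/pAp_setP; exists a. Qed.

(** * The Morita context *)

Lemma subspace_pAp : subspace B. Proof. exact: (subspace_image linear_pmulp pAp_setP). Qed.
Lemma subspace_pA : subspace pA. Proof. exact: (subspace_image linear_pmul pA_setP). Qed.
Lemma subspace_Ap : subspace Ap. Proof. exact: (subspace_image linear_mulp Ap_setP). Qed.

Lemma subcomod_pAp : subcomod al B. Proof. exact: (subcomod_image pAp_setP coact_pmulp). Qed.
Lemma subcomod_pA : subcomod al pA. Proof. exact: (subcomod_image pA_setP coact_pmul). Qed.
Lemma subcomod_Ap : subcomod al Ap. Proof. exact: (subcomod_image Ap_setP coact_mulp). Qed.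

Lemma mulclosed_pAp : mulclosed m B B B.
Proof.
move=> x y /pAp_setP [a ->] /pAp_setP [b ->].
by apply/pAp_setP; exists (a ** pmul b); rewrite pmulpM.
Qed.

Lemma mulclosed_pAp_pA : mulclosed m B pA pA.
Proof.
move=> x y /pAp_setP [a ->] /pA_setP [b ->].
by apply/pA_setP; exists (mulp a ** pmul b); rewrite pmulM.
Qed.

Lemma mulclosed_pA_Ap : mulclosed m pA Ap B.
Proof.
move=> x y /pA_setP [a ->] /Ap_setP [b ->].
by apply/pAp_setP; exists (a ** b); rewrite /pmulp mulpM pmulM.
Qed.

Lemma mulclosed_pA_A : mulclosed m pA T pA.
Proof. by move=> x y /pA_setP [a ->] _; apply/pA_setP; exists (a ** y); rewrite pmulM. Qed.

Lemma mulclosed_Ap_pAp : mulclosed m Ap B Ap.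
Proof.
move=> x y /Ap_setP [a ->] /pAp_setP [b ->].
by apply/Ap_setP; exists (mulp a ** pmulp b); rewrite mulpM mulp_pmulp.
Qed.

Lemma mulclosed_A_Ap : mulclosed m T Ap Ap.
Proof. by move=> x y _ /Ap_setP [a ->]; apply/Ap_setP; exists (x ** a); rewrite mulpM. Qed.

Lemma pA_absorb g x : pA x -> g ** x = x -> pmul g ** x = x.
Proof. by case/pA_setP=> a -> ga; rewrite -pmulM ga pmul_idem. Qed.

Lemma mult_bij_pA_Ap : mult_bij m pA Ap T B.
Proof.
split=> [s t hs ht hst f hf f_bal|z /pAp_setP [a ->]]; last first.
  have [e [he [_ ae]]] := local_unit1 a.
  exists [:: (pmul a, mulp e)]; split.
    move=> u; rewrite mem_seq1 => /eqP -> /=.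
    by split; [exact: pA_pmul | exact: Ap_mulp].
  by rewrite /mulmap big_seq1 /= -pmulM -mulpM ae.
have [g [hg hgs]] := local_unit [seq u.1 | u <- s ++ t].
have sumE r : {subset r <= s ++ t} -> \sum_(u <- r) f u.1 u.2 = f (pmul g) (mulmap m r).
  move=> sub; rewrite /mulmap (bilin_sumr hf); apply: eq_big_seq => u /sub hu.
  have [u1 u2] : pA u.1 /\ Ap u.2 by move: hu; rewrite mem_cat => /orP [/hs|/ht].
  have [gu _] := hgs u.1 (map_f _ hu).
  by rewrite -{1}(pA_absorb u1 gu) f_bal //; exact: pA_pmul.
by rewrite !sumE ?hst // => u hu; rewrite mem_cat hu ?orbT.
Qed.

Hypothesis p_full : mult_full m Ainv lam.

Definition psum (ws : seq (A * A)) := \sum_(w <- ws) w.1 ** pmul w.2.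

Lemma full_local_unit (xs : seq A) : exists ws, [/\ in2 Ainv Ainv ws, Ainv (psum ws) &
  forall x, x \in xs -> psum ws ** x = x /\ x ** psum ws = x].
Proof.
have [g [hg hgs]] := local_unit xs; have [ws [hws gE]] := p_full hg.
suff gws : g = psum ws by exists ws; rewrite -gws.
rewrite gE; apply: eq_big_seq => w /hws [_ hw2]; by rewrite pmul_coinv.
Qed.

Lemma Ap_pA_factor (f : A -> A -> k) ws x y : bilin f ->
  (forall x y r, Ap x -> pA y -> B r -> f (x ** r) y = f x (r ** y)) ->
  Ap x -> pA y -> y ** psum ws = y ->
  f x y = \sum_(w <- ws) f (mulp (x ** y ** w.1)) (pmul w.2).
Proof.
move=> hf f_bal hx /[dup] hy /pA_setP [b yE] yu.
rewrite -{1}yu /psum mulm_sumr (bilin_sumr hf); apply: eq_bigr => w _.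
have hr : B (mulp (y ** w.1)).
  by apply/pAp_setP; exists (b ** w.1); rewrite yE -pmulM /pmulp pmul_mulpC.
rewrite -mulmA -mulp_pmul mulmA -f_bal //; last exact: pA_pmul.
by rewrite -mulpM.
Qed.

Lemma mult_bij_Ap_pA : mult_bij m Ap pA B T.
Proof.
split=> [s t hs ht hst f hf f_bal|z _]; last first.
  have [ws [_ _ /(_ z (mem_head _ _)) [_ zu]]] := full_local_unit [:: z].
  exists [seq (mulp (z ** w.1), pmul w.2) | w <- ws]; split.
    move=> u /mapP [w _ ->] /=.
    by split; [exact: Ap_mulp | exact: pA_pmul].
  rewrite /mulmap big_map -[RHS]zu /psum mulm_sumr; apply: eq_bigr => w _.
  by rewrite mulp_pmul mulmA.
have [ws [_ _ hus]] := full_local_unit [seq u.2 | u <- s ++ t].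
pose F z := \sum_(w <- ws) f (mulp (z ** w.1)) (pmul w.2).
have F_scalar : scalar F.
  move=> a x y; rewrite /F mulr_sumr -big_split /=; apply: eq_bigr => w _.
  by rewrite mulmPl linear_mulp; case: hf => -> _.
have sumE r : {subset r <= s ++ t} -> \sum_(u <- r) f u.1 u.2 = F (mulmap m r).
  move=> sub; rewrite /mulmap (scalar_bigsum F_scalar); apply: eq_big_seq => u /sub hu.
  have [u1 u2] : Ap u.1 /\ pA u.2 by move: hu; rewrite mem_cat => /orP [/hs|/ht].
  have [_ uu] := hus u.2 (map_f _ hu).
  exact: Ap_pA_factor.
by rewrite !sumE ?hst // => u hu; rewrite mem_cat hu ?orbT.
Qed.

(** * The Galois coaction on pAp *)

Lemma galmap_psum c y ws : in2 Ainv Ainv ws ->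
  teq2 (galmap m al [seq (pmulp (c ** w.1), pmulp (w.2 ** y)) | w <- ws])
       [seq (pmulp (c ** (psum ws ** z.1)), z.2) | z <- al y].
Proof.
move=> hws f hf; rewrite galmap_sum !big_map /=.
transitivity (\sum_(w <- ws) \sum_(z <- al y) f (pmulp (c ** (w.1 ** pmul w.2 ** z.1))) z.2).
  apply: eq_big_seq => w /hws [_ hw2].
  have := coact_pmulp_coinvMl y hw2 (bilin_compl (mulm_linearr (pmulp (c ** w.1))) hf).
  rewrite big_map /= => ->; apply: eq_bigr => z _.
  by rewrite pmulpM pmulM !mulmA.
rewrite exchange_big /=; apply: eq_bigr => z _.
have f_scalar : scalar (fun d => f (pmulp (c ** (d ** z.1))) z.2).
  by move=> a d1 d2; rewrite mulmPl mulmPr linear_pmulp; case: hf => -> _.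
by rewrite /psum (scalar_bigsum f_scalar).
Qed.

Lemma linear_pmulp_mulm c : linear (fun d => pmulp (c ** d)).
Proof. by move=> a x y; rewrite mulmPr linear_pmulp. Qed.

Hypothesis galois_A : galois_on m al T.

Lemma galois_pAp_surj1 a h : exists s, in2 B B s /\ teq2 (galmap m al s) [:: (pmulp a, h)].
Proof.
set b := pmulp a.
have [v [_ [_ bv]]] := local_unit1 b.
have [s0 [_ hs0]] := galois_A.2 [:: (v, h)] (fun _ _ => I).
have [ws [hws hu hus]] := full_local_unit [seq x.2 | x <- s0].
exists [seq (pmulp (b ** x.1 ** w.1), pmulp (w.2 ** x.2)) | x <- s0, w <- ws]; split.
  by move=> y /allpairsP [[x w] [_ _ ->]]; split; exact: pAp_pmulp.
move=> f hf; rewrite galmap_sum big_allpairs_dep /=.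
transitivity (\sum_(x <- s0) \sum_(z <- al x.2) f (pmulp (b ** x.1 ** (psum ws ** z.1))) z.2).
  apply: eq_bigr => x _; have := galmap_psum (b ** x.1) x.2 hws hf.
  by rewrite galmap_sum !big_map /= => ->.
transitivity (\sum_(x <- s0) \sum_(z <- al x.2) f (pmulp (b ** x.1 ** z.1)) z.2).
  apply: eq_big_seq => x hx; have [ux2 _] := hus x.2 (map_f _ hx).
  have := coact_absorb_unit hu ux2 (bilin_compl (linear_pmulp_mulm (b ** x.1)) hf).
  by rewrite big_map.
have := hs0 _ (bilin_compl (linear_pmulp_mulm b) hf).
rewrite (galmap_sum s0 (fun c h => f (pmulp (b ** c)) h)) !big_seq1 /= bv pmulp_idem => <-.
by apply: eq_bigr => x _; apply: eq_bigr => z _; rewrite mulmA.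
Qed.

Lemma galois_pAp_surj (u : seq (A * H)) : (forall v, v \in u -> B v.1) ->
  exists s, in2 B B s /\ teq2 (galmap m al s) u.
Proof.
elim: u => [|[x h] u IH] hu; first by exists [::].
have /pAp_setP [a ->] : B x by apply: (hu (x, h)); rewrite mem_head.
have [s1 [hs1 e1]] := galois_pAp_surj1 a h.
have [v hv|s2 [hs2 e2]] := IH; first by apply: hu; rewrite inE hv orbT.
exists (s1 ++ s2); split; first by move=> w; rewrite mem_cat => /orP [/hs1|/hs2].
by rewrite galmap_cat; exact: (teq2_cat e1 e2).
Qed.

Section BalancedExtension.
Variable f : A -> A -> k.
Hypothesis f_bilin : bilin f.
Hypothesis f_bal : forall x y r, B x -> B y -> B r /\ Ainv r -> f (x ** r) y = f x (r ** y).

Definition ext_along ws x y := \sum_(w <- ws) f (pmulp (x ** w.1)) (pmulp (w.2 ** y)).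

(* Both sides equal the double sum over [w, w'] of
   [f (p x w'.1 p) (p w'.2 phi(w.1) p w.2 y p)], by balancedness over [pmulp (w'.2 ** phi w.1)]. *)
Lemma ext_along_shift (phi : A -> A) ws ws' x y : linear phi ->
  (forall c, Ainv c -> Ainv (phi c)) -> (forall u v, phi (u ** v) = phi u ** v) ->
  in2 Ainv Ainv ws -> in2 Ainv Ainv ws' -> x ** psum ws' = x -> psum ws ** y = y ->
  \sum_(w <- ws) f (pmulp (x ** phi w.1)) (pmulp (w.2 ** y)) =
  \sum_(w' <- ws') f (pmulp (x ** w'.1)) (pmulp (w'.2 ** phi y)).
Proof.
move=> hphi phi_coinv phiM hws hws' xu uy.
transitivity (\sum_(w <- ws) \sum_(w' <- ws')
  f (pmulp (x ** w'.1)) (pmulp (w'.2 ** phi (w.1 ** pmul w.2 ** y)))).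
  apply: eq_big_seq => w /hws [hw1 hw2].
  have xE : pmulp (x ** phi w.1) =
      \sum_(w' <- ws') pmulp (x ** w'.1) ** pmulp (w'.2 ** phi w.1).
    rewrite -{1}xu /psum mulm_sumr mulm_suml (linear_bigsum linear_pmulp).
    by apply: eq_bigr => w' _; rewrite pmulpM pmulM !mulmA.
  rewrite xE (bilin_suml f_bilin); apply: eq_big_seq => w' /hws' [_ hw2'].
  have hr : B (pmulp (w'.2 ** phi w.1)) /\ Ainv (pmulp (w'.2 ** phi w.1)).
    by split; [exact: pAp_pmulp | apply/coinv_pmulp/coinvM/phi_coinv].
  by rewrite (f_bal (pAp_pmulp _) (pAp_pmulp _) hr) pmulpM pmulM !phiM !mulmA.
rewrite exchange_big /=; apply: eq_bigr => w' _.
pose g c := f (pmulp (x ** w'.1)) (pmulp (w'.2 ** phi (c ** y))).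
have g_scalar : scalar g.
  by move=> a c1 c2; rewrite /g mulmPl hphi mulmPr linear_pmulp; case: f_bilin => _ ->.
transitivity (g (psum ws)); last by rewrite /g uy.
by rewrite /psum (scalar_bigsum g_scalar).
Qed.

Lemma ext_along_indep ws ws' x y : in2 Ainv Ainv ws -> in2 Ainv Ainv ws' ->
  x ** psum ws' = x -> psum ws ** y = y -> ext_along ws x y = ext_along ws' x y.
Proof. exact: (ext_along_shift (phi := id)). Qed.

Lemma adapted_pairs_exist x y :
  exists ws, [/\ in2 Ainv Ainv ws, x ** psum ws = x & psum ws ** y = y].
Proof.
have [ws [hws _ hs]] := full_local_unit [:: x; y]; exists ws.
have [_ xu] := hs x (mem_head _ _).
by have /hs[uy _] : y \in [:: x; y] by rewrite !inE eqxx orbT.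
Qed.

Definition adapted_pairs x y :=
  proj1_sig (constructive_indefinite_description _ (adapted_pairs_exist x y)).

Definition ext x y := ext_along (adapted_pairs x y) x y.

Lemma extE ws x y : in2 Ainv Ainv ws -> x ** psum ws = x -> psum ws ** y = y ->
  ext x y = ext_along ws x y.
Proof.
move=> hws xu uy; rewrite /ext /adapted_pairs.
case: constructive_indefinite_description => ws' [hws' xu' uy'] /=.
exact: ext_along_indep.
Qed.

Lemma ext_bilin : bilin ext.
Proof.
case: f_bilin => fl fr; split=> [y a x1 x2|x a y1 y2].
  have [ws [hws _ hs]] := full_local_unit [:: x1; x2; y].
  have [_ x1u] := hs x1 (mem_head _ _).
  have /hs[_ x2u] : x2 \in [:: x1; x2; y] by rewrite !inE eqxx orbT.
  have /hs[uy _] : y \in [:: x1; x2; y] by rewrite !inE eqxx !orbT.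
  have xu : (a *: x1 + x2) ** psum ws = a *: x1 + x2 by rewrite mulmPl x1u x2u.
  rewrite !(extE (ws := ws)) // /ext_along mulr_sumr -big_split /=.
  by apply: eq_bigr => w _; rewrite mulmPl linear_pmulp fl.
have [ws [hws _ hs]] := full_local_unit [:: y1; y2; x].
have [uy1 _] := hs y1 (mem_head _ _).
have /hs[uy2 _] : y2 \in [:: y1; y2; x] by rewrite !inE eqxx orbT.
have /hs[_ xu] : x \in [:: y1; y2; x] by rewrite !inE eqxx !orbT.
have uy : psum ws ** (a *: y1 + y2) = a *: y1 + y2 by rewrite mulmPr uy1 uy2.
rewrite !(extE (ws := ws)) // /ext_along mulr_sumr -big_split /=.
by apply: eq_bigr => w _; rewrite mulmPr linear_pmulp fr.
Qed.

Lemma ext_balanced x y r : Ainv r -> ext (x ** r) y = ext x (r ** y).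
Proof.
move=> hr; have [ws [hws _ hs]] := full_local_unit [:: x; r; y].
have [_ xu] := hs x (mem_head _ _).
have /hs[ur ru] : r \in [:: x; r; y] by rewrite !inE eqxx orbT.
have /hs[uy _] : y \in [:: x; r; y] by rewrite !inE eqxx !orbT.
rewrite (extE (ws := ws)) ?mulmA ?ru // (extE (ws := ws)) -?mulmA ?ur //.
have := ext_along_shift (mulm_linearr r) (fun c hc => coinvM hr hc)
  (fun u v => esym (mulmA r u v)) hws hws xu uy.
by rewrite /ext_along => <-; apply: eq_bigr => w _; rewrite mulmA.
Qed.

Lemma ext_pAp x y : B x -> B y -> ext x y = f x y.
Proof.
move=> /pAp_setP [a ->] /pAp_setP [b ->].
have [ws [hws xu uy]] := adapted_pairs_exist (pmulp a) (pmulp b).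
rewrite (extE hws xu uy) /ext_along.
transitivity (\sum_(w <- ws) f (pmulp a) (pmulp (w.1 ** pmul w.2) ** pmulp b)).
  apply: eq_big_seq => w /hws [hw1 _].
  have hr : B (pmulp w.1) /\ Ainv (pmulp w.1) by split; [exact: pAp_pmulp | exact: coinv_pmulp].
  by rewrite pmulpMl (f_bal (pAp_pmulp _) (pAp_pmulp _) hr) pmulpM pmulM -mulmA pmulpMr.
rewrite -(bilin_sumr f_bilin) -mulm_suml -(linear_bigsum linear_pmulp).
by rewrite -pmulpMr uy pmulp_idem.
Qed.

End BalancedExtension.

Lemma galois_pAp_inj s t : in2 B B s -> in2 B B t ->
  teq2 (galmap m al s) (galmap m al t) -> bal_eq m B B (fun x => B x /\ Ainv x) s t.
Proof.
move=> hs ht hst f hf f_bal.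
have := galois_A.1 s t (fun _ _ => conj I I) (fun _ _ => conj I I) hst (ext f)
  (ext_bilin hf f_bal) (fun x y r _ _ hr => ext_balanced hf f_bal x y hr.2).
have sumE r : in2 B B r -> \sum_(u <- r) ext f u.1 u.2 = \sum_(u <- r) f u.1 u.2.
  by move=> hr; apply: eq_big_seq => u /hr [u1 u2]; rewrite ext_pAp.
by rewrite !sumE.
Qed.

Lemma galois_pAp : galois_on m al B.
Proof. exact: (conj galois_pAp_inj galois_pAp_surj). Qed.

End CornerAlgebra.

Theorem mainTheorem7 (k : fieldType) (H : algType k) (D : H -> seq (H * H))
    (eps : H -> k) (S : H -> H) (A : lmodType k) (m : A -> A -> A)
    (al : A -> seq (A * H)) (lam rho : A -> A) :
  is_hopf D eps S ->
  galois_coaction D eps m al ->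
  coinv_local_units m al ->
  is_multiplier m (coinv al) lam rho ->
  mult_idem (coinv al) lam rho ->
  mult_full m (coinv al) lam ->
  let B := pAp_set m al lam rho in
  let pA := pA_set m al lam in
  let Ap := Ap_set m al rho in
  let T := fun _ : A => True in
  (* alpha restricts to a Galois coaction beta on B = pAp *)
  [/\ subspace B, mulclosed m B B B, subcomod al B & galois_on m al B] /\
  (* (B,beta) and (A,alpha) are H-equivariantly Morita equivalent via the
     context [[B, pA], [Ap, A]] (all multiplications those of A) *)
  [/\ subspace pA /\ subspace Ap,
      subcomod al pA /\ subcomod al Ap,
      [/\ mulclosed m B pA pA, mulclosed m pA Ap B, mulclosed m pA T pA,
          mulclosed m Ap B Ap & mulclosed m T Ap Ap],
      mult_bij m pA Ap T B &
      mult_bij m Ap pA B T].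
Proof.
move=> _ [[m_nualg _ al_mulm _ _] galois_A] lu p_mult p_idem p_full /=.
split; split.
- by apply: subspace_pAp.
- by apply: mulclosed_pAp.
- by apply: subcomod_pAp.
- by apply: galois_pAp.
- by split; [apply: (subspace_pA (rho := rho)) | apply: (subspace_Ap (lam := lam))].
- by split; [apply: (subcomod_pA (rho := rho)) | apply: (subcomod_Ap (lam := lam))].
- by split; [apply: mulclosed_pAp_pA | apply: mulclosed_pA_Ap | apply: (mulclosed_pA_A (rho := rho))
         | apply: mulclosed_Ap_pAp | apply: (mulclosed_A_Ap (lam := lam))].
- by apply: mult_bij_pA_Ap.
- by apply: mult_bij_Ap_pA.
Qed.
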